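(* Let $G=(V,E)$ be a finite connected undirected graph with diameter $D$, and let $T\ge 4$ be an integer. Consider any execution of Algorithm FS (described in the context) on $G$ under arbitrary adversarial activations, with rounds numbered so that round $0$ is the first round at whose beginning some node is active. Let $$R = 4D + \Bigl\lfloor \frac{D}{\lfloor T/4\rfloor}\Bigr\rfloor\cdot (T \bmod 4).$$ Then for every round $t\ge R$ all nodes are active and $\delta_t(v)=\delta_t(w)$ for all $v,w\in V$. Moreover, there is a round $t_1$ such that for every $t\ge t_1$, each node $v$ beeps in round $t$ if and only if $\delta_t(v)=0$. In particular $R\le 7D$, so synchronization is reached in $O(D)$ rounds. Each node stores only $\delta(v)$ ($\lceil \log_2 T\rceil$ bits) and $\mathit{State}(v)$, $\mathit{Induced}(v)$ (3 bits in total).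
   Context: Model (beeping model with arbitrary activations). $G=(V,E)$ is a finite connected undirected graph with $n$ nodes and diameter $D$; $N(v)$ is the set of neighbors of $v$. Time proceeds in synchronous rounds. An integer $T\ge 4$ is known to all nodes. In each round, each active node either beeps or listens; a listening node learns only whether at least one of its neighbors beeped in that round (not how many, nor which). Checkpoints: $\mathit{CP}=\{c\in\mathbb{N}_0 : c\equiv 0 \pmod 4 \text{ and } T-c>3\}$, i.e. $\mathit{CP}=\{0,4,\dots,4(\lfloor T/4\rfloor-1)\}$. Algorithm FS. Each node $v$ stores $\delta(v)\in\{0,\dots,T-1\}$, $\mathit{State}(v)\in\{\mathit{Inactive},\mathit{Beep},\mathit{Listen}\}$ and $\mathit{Induced}(v)\in\{\mathit{true},\mathit{false}\}$. Initially all nodes are Inactive (other variables arbitrary). An inactive node does nothing except notice beeps. A node $v$ is \emph{activated in round $t$} if either the adversary chooses to activate it in round $t$, or $v$ is inactive and some neighbor beeps in round $t-1$; in both cases at the beginning of round $t$ it has $\delta(v)=1$, $\mathit{State}(v)=\mathit{Beep}$, $\mathit{Induced}(v)=\mathit{true}$. The adversary may activate any inactive nodes in any rounds. In each round $t$, each active node $v$ acts according to its state at the beginning of the round: (1) If $\mathit{State}(v)=\mathit{Beep}$: $v$ beeps; $\delta(v)\gets\delta(v)+1 \bmod T$; $\mathit{State}(v)\gets\mathit{Listen}$. (2) If $\mathit{State}(v)=\mathit{Listen}$ and at least one neighbor beeps in round $t$: if $\delta(v)\equiv c-1 \pmod T$ for some $c\in\mathit{CP}$, then $\delta(v)\gets\delta(v)+2\bmod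 T$, $\mathit{State}(v)\gets\mathit{Beep}$, $\mathit{Induced}(v)\gets\mathit{true}$ (we say $v$ \emph{gets induced} in round $t$, and each beeping neighbor $w$ \emph{induces} $v$ in round $t$); otherwise $\delta(v)\gets\delta(v)+1\bmod T$. (3) If $\mathit{State}(v)=\mathit{Listen}$ and no neighbor beeps in round $t$: $\delta(v)\gets\delta(v)+1\bmod T$; then, if ($\mathit{Induced}(v)=\mathit{true}$ and the new $\delta(v)\in\mathit{CP}$) or the new $\delta(v)=0$, set $\mathit{State}(v)\gets\mathit{Beep}$ and $\mathit{Induced}(v)\gets\mathit{false}$. Notation: $\delta_t(v)$, $\mathit{State}_t(v)$, $\mathit{Induced}_t(v)$ denote values at the beginning of round $t$. Rounds are numbered so that round $0$ is the first round at whose beginning some node is active. *)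

From mathcomp Require Import all_boot.
Set Implicit Arguments. Unset Strict Implicit. Unset Printing Implicit Defensive.

(* Graph notions: a simple undirected graph is a symmetric irreflexive
   relation [adj] on a finite type [V]. *)

Fixpoint reach (V : finType) (adj : rel V) (k : nat) (v w : V) : bool :=
  match k with
  | 0 => v == w
  | k'.+1 => reach adj k' v w || [exists u, adj v u && reach adj k' u w]
  end.

Definition connected (V : finType) (adj : rel V) : Prop :=
  forall v w : V, exists k, reach adj k v w.

Definition is_diameter (V : finType) (adj : rel V) (D : nat) : Prop :=
  (forall v w : V, reach adj D v w) /\
  (forall D', (forall v w : V, reach adj D' v w) -> D <= D').

Inductive phase := Beep | Listen.

(* Local state of a node: Inactive, or active with
   delta in {0..T-1}, State in {Beep, Listen}, and Induced. *)
Inductive nstate :=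
  | Inactive
  | Active of nat & phase & bool.

Definition inCP (T c : nat) : bool := (c %% 4 == 0) && (c + 3 < T).

Definition activated : nstate := Active 1 Beep true.

Definition beeps (s : nstate) : bool :=
  if s is Active _ Beep _ then true else false.

Definition delta_of (s : nstate) : option nat :=
  if s is Active d _ _ then Some d else None.

Definition fs_active_step (T : nat) (d : nat) (p : phase) (ind : bool)
    (heard : bool) : nstate :=
  match p with
  | Beep => Active (d.+1 %% T) Listen ind
  | Listen =>
      if heard then
        if has (fun c => inCP T c && (d.+1 == c %[mod T])) (iota 0 T)
        then Active (d.+2 %% T) Beep true
        else Active (d.+1 %% T) Listen ind
      else
        let d' := d.+1 %% T in
        if (ind && inCP T d') || (d' == 0)
        then Active d' Beep false
        else Active d' Listen ind
  end.

(* Configuration at the beginning of round t, given the adversary's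
   activation choices [adv t v] ("adversary activates v in round t";
   only effective on inactive nodes). Round 0 is the first round at whose
   beginning some node is active, so before round 0 all nodes are inactive
   and the nodes active at round 0 are exactly those activated by the
   adversary in round 0. *)
Fixpoint config (V : finType) (adj : rel V) (T : nat)
    (adv : nat -> V -> bool) (t : nat) : V -> nstate :=
  match t with
  | 0 => fun v => if adv 0 v then activated else Inactive
  | t'.+1 => fun v =>
      let c := config adj T adv t' in
      let heard := [exists w, adj v w && beeps (c w)] in
      match c v with
      | Inactive => if heard || adv t'.+1 v then activated else Inactive
      | Active d p ind => fs_active_step T d p ind heard
      end
  end.

Definition is_active (s : nstate) : bool :=
  if s is Inactive then false else true.

From mathcomp Require Import all_boot zify.
Set Implicit Arguments. Unset Strict Implicit. Unset Printing Implicit Defensive.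

(* Besides its phase delta(v), every active node gets an unbounded logical
   clock [clock t v]: 1 on activation, then +1 per round and +1 more per
   induction, so that delta(v) = clock mod T.  A node is [synced] in round t
   when its clock has the largest possible value t + 1; synced nodes agree on
   their phase.  Three invariants, proved jointly by induction on t, control
   the clocks: the clock determines the phase and the admissible Beep states,
   a node past its first round has only active neighbours, and adjacent clocks
   differ by at most one except right after an induction.

   From them, a node induced at a checkpoint
   round s listens until the next checkpoint round s', beeps just before it,
   and thereby synchronizes each neighbour by round s'.  By induction on the
   distance every node is synced by the D-th checkpoint round [cp_round T D],
   which is exactly the bound R.  Once all nodes are synced no induction
   occurs, the flags Induced are cleared at the next wrap-around of the phase
   to 0, and afterwards a node beeps exactly when its phase is 0. *)

Section CheckpointArithmetic.
Variable T : nat.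
Hypothesis hT : 4 <= T.

Lemma cp0 : inCP T 0.
Proof. by rewrite /inCP /=; lia. Qed.

Lemma mod_lt x : x %% T < T.
Proof. by rewrite ltn_pmod //; lia. Qed.

Lemma modSmod x : (x %% T).+1 %% T = x.+1 %% T.
Proof. by rewrite -[(x %% T).+1]addn1 modnDml addn1. Qed.

Lemma modS2mod x : (x %% T).+2 %% T = x.+2 %% T.
Proof. by rewrite -[(x %% T).+2]addn2 modnDml addn2. Qed.

Lemma mod_small_offset a k : a < T -> k <= 2 ->
  (a + k) %% T = if a + k < T then a + k else a + k - T.
Proof.
move=> ha hk; case: ifP => h; first by rewrite modn_small.
have -> : a + k = (a + k - T) + T by lia.
by rewrite modnDr modn_small; lia.
Qed.

Definition at_cp (s : nat) : bool := inCP T (s %% T).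

(* The phases at which a node can be in state Beep: checkpoints (spontaneous
   beeps, including the wrap-around to 0) and one past a checkpoint (beeps
   right after being induced). *)
Definition beep_phase (d : nat) : bool := inCP T d || (0 < d) && inCP T d.-1.

Lemma beep_phase1 : beep_phase 1.
Proof. by rewrite /beep_phase cp0 orbT. Qed.

(* One phase before a checkpoint no node is in state Beep; this is what makes
   an induction by a neighbour's beep possible and rules out stray beeps. *)
Lemma no_beep_before_cp y : at_cp y.+1 -> ~~ beep_phase (y %% T).
Proof.
rewrite /at_cp -modSmod -addn1 mod_small_offset ?mod_lt //.
have := mod_lt y; move: (y %% T) => a ha.
by rewrite /beep_phase /inCP; case: ifP => h; lia.
Qed.

Lemma no_beep_two_before_cp y : at_cp y.+2 -> ~~ beep_phase (y %% T).
Proof.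
rewrite /at_cp -modS2mod -addn2 mod_small_offset ?mod_lt //.
have := mod_lt y; move: (y %% T) => a ha.
by rewrite /beep_phase /inCP; case: ifP => h; lia.
Qed.

Lemma beep_phase_after_cp d : inCP T (d.+1 %% T) -> beep_phase (d.+2 %% T).
Proof.
move=> hc; have := hc; rewrite /inCP => /andP [_ hlt].
rewrite -modS2mod -addn2 mod_small_offset ?mod_lt //.
move: hc hlt; rewrite -modSmod -addn1 mod_small_offset ?mod_lt //.
have := mod_lt d; move: (d %% T) => a ha.
by case: ifP => h1; case: ifP => h2; rewrite /beep_phase /inCP; lia.
Qed.

Lemma cp_gap s s' : at_cp s -> at_cp s' -> s < s' -> s + 4 <= s'.
Proof.
move=> hs hs' lt; case: leqP => // close.
have [k eks hk] : exists2 k, s' = s + k & 0 < k < 4 by exists (s' - s); lia.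
move: hs' hs; rewrite eks /at_cp /inCP -modnDml.
have := mod_lt s; move: (s %% T) => a ha h1 h2.
by move: h1; rewrite (@modn_small (a + k)); lia.
Qed.

Lemma next_cp s : exists s', [/\ s < s', at_cp s',
  forall x, s < x -> x < s' -> ~~ at_cp x & forall x, s < x -> at_cp x -> s' <= x].
Proof.
have ex : exists x, (s < x) && at_cp x.
  exists ((s %/ T).+1 * T); rewrite ltn_ceil; last lia.
  by rewrite /at_cp modnMl cp0.
case: (ex_minnP ex) => s' /andP [lt cp] min; exists s'; split=> // x lx.
- by move=> xs'; apply/negP => cpx; have := min x; rewrite lx cpx; lia.
- by move=> cpx; apply: min; rewrite lx cpx.
Qed.

End CheckpointArithmetic.

(* The checkpoint rounds [0, 4, ..., 4(m-1), T, T + 4, ...] with [m = T/4],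
   enumerated: [cp_round k] is the [k]-th one.  Synchronization spreads one
   hop per checkpoint round, and [cp_round D] is the bound [R] of the theorem. *)
Section CheckpointSchedule.
Variable T : nat.
Hypothesis hT : 4 <= T.

Definition cp_round (k : nat) : nat := (k %/ (T %/ 4)) * T + 4 * (k %% (T %/ 4)).

Lemma quarter_pos : 0 < T %/ 4.
Proof. by rewrite divn_gt0. Qed.

Lemma quarter_le : 4 * (T %/ 4) <= T.
Proof. by rewrite mulnC leq_divM. Qed.

Lemma cp_round_at_cp k : at_cp T (cp_round k).
Proof.
have mp := quarter_pos; have ml := quarter_le; have r := ltn_pmod k mp.
rewrite /at_cp /cp_round modnMDl modn_small; last lia.
by rewrite /inCP modnMr /=; lia.
Qed.

Lemma cp_round_lt k : cp_round k < cp_round k.+1.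
Proof.
have mp := quarter_pos; have ml := quarter_le.
rewrite /cp_round; move: mp ml; set m := T %/ 4 => mp ml.
have ek := divn_eq k m; have r := ltn_pmod k mp.
move: (k %/ m) (k %% m) ek r => q r' ek r.
case: (ltnP r'.+1 m) => h.
- have -> : k.+1 = q * m + r'.+1 by lia.
  by rewrite divnMDl // modnMDl (divn_small h) (modn_small h) addn0; lia.
- have -> : k.+1 = q.+1 * m by rewrite mulSn; lia.
  by rewrite mulnK // modnMl mulSn; nia.
Qed.

Lemma cp_round0 : cp_round 0 = 0.
Proof. by rewrite /cp_round div0n mod0n. Qed.

Lemma cp_roundE k : cp_round k = 4 * k + (k %/ (T %/ 4)) * (T %% 4).
Proof.
rewrite /cp_round; have eT := divn_eq T 4; have ek := divn_eq k (T %/ 4).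
move: (T %/ 4) (T %% 4) (k %/ (T %/ 4)) (k %% (T %/ 4)) eT ek => m x q r eT ek.
by rewrite {1}eT {1}ek; nia.
Qed.

Lemma cp_round_le k : cp_round k <= 7 * k.
Proof.
rewrite cp_roundE; have h1 : k %/ (T %/ 4) <= k := leq_div _ _.
have h2 : T %% 4 <= 3 by have := ltn_pmod T (isT : 0 < 4); lia.
by have := leq_mul h1 h2; lia.
Qed.

End CheckpointSchedule.

Section LocalRule.
Variable T : nat.
Hypothesis hT : 4 <= T.

Lemma induce_condE d :
  has (fun c => inCP T c && (d.+1 == c %[mod T])) (iota 0 T) = inCP T (d.+1 %% T).
Proof.
apply/hasP/idP => [[c] | hc].
- by rewrite mem_iota => /andP [_ hcT] /andP [hc /eqP ->]; rewrite modn_small.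
- exists (d.+1 %% T); first by rewrite mem_iota mod_lt.
  by rewrite hc modn_mod eqxx.
Qed.

Lemma step_listenE d i (heard : bool) : fs_active_step T d Listen i heard =
  if heard then
    if inCP T (d.+1 %% T) then Active (d.+2 %% T) Beep true
    else Active (d.+1 %% T) Listen i
  else if (i && inCP T (d.+1 %% T)) || (d.+1 %% T == 0)
    then Active (d.+1 %% T) Beep false
    else Active (d.+1 %% T) Listen i.
Proof. by rewrite /= induce_condE. Qed.

Definition induces (d : nat) (p : phase) (heard : bool) : bool :=
  if p is Listen then heard && inCP T (d.+1 %% T) else false.

Lemma step_delta d p i heard : exists p' i',
  fs_active_step T d p i heard = Active ((d + 1 + induces d p heard) %% T) p' i'.
Proof.
case: p; first by rewrite /= addn0 addn1; eauto.
rewrite step_listenE /induces; case: heard; case: ifP => _ /=;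
  rewrite ?addn0 ?addn1; eauto.
Qed.

Lemma step_induced d p i heard : induces d p heard ->
  fs_active_step T d p i heard = Active (d.+2 %% T) Beep true.
Proof. by case: p => //; rewrite step_listenE => /andP [-> ->]. Qed.

Lemma step_beep_phase d p i heard d' i' :
  fs_active_step T d p i heard = Active d' Beep i' -> beep_phase T d'.
Proof.
case: p => //; rewrite step_listenE; case: heard; case: ifP => // hc.
- by case=> <- _; apply: beep_phase_after_cp.
- case/orP: hc => [/andP [_ hc] | /eqP h0] [<- _]; rewrite /beep_phase.
  + by rewrite hc.
  + by rewrite h0 cp0.
Qed.

Lemma step_keeps_uninduced d p heard : ~~ induces d p heard ->
  exists d' p', fs_active_step T d p false heard = Active d' p' false.
Proof.
case: p; first by rewrite /=; eauto.
by rewrite step_listenE /induces; case: heard => /= [/negbTE ->|_]; [|case: ifP]; eauto.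
Qed.

Lemma beep_not_before_cp d : d < T -> beep_phase T d -> ~~ inCP T (d.+1 %% T).
Proof.
move=> hd bd; apply: contraL bd => hc.
by rewrite -(modn_small hd); apply: no_beep_before_cp.
Qed.

Lemma step_wrap d p i heard : d < T -> (p = Beep -> beep_phase T d) ->
  ~~ induces d p heard -> d.+1 %% T = 0 ->
  fs_active_step T d p i heard = Active 0 Beep false.
Proof.
move=> hd hb ni h0; have cp : inCP T (d.+1 %% T) by rewrite h0 cp0.
case: p hb ni => [hb _ | _]; first by have := beep_not_before_cp hd (hb erefl); rewrite cp.
by rewrite step_listenE /induces h0 (cp0 hT); case: heard => //= _; rewrite orbT.
Qed.

Lemma step_uninduced_beeps d p heard : d < T -> (p = Beep -> beep_phase T d) ->
  ~~ induces d p heard ->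
  beeps (fs_active_step T d p false heard) =
  (delta_of (fs_active_step T d p false heard) == Some 0).
Proof.
move=> hd hb ni; case: p hb ni => [hb _ | _].
- have := beep_not_before_cp hd (hb erefl); rewrite /= /eq_op /=.
  by case: eqP => [->|//]; rewrite (cp0 hT).
- rewrite step_listenE /induces; case: heard => /= [/negbTE nc | _].
  + rewrite nc /= /eq_op /=; case: eqP => [e|//].
    by move: nc; rewrite e (cp0 hT).
  + by case: ifP.
Qed.

End LocalRule.

Section Execution.
Variables (V : finType) (adj : rel V) (T : nat) (adv : nat -> V -> bool).
Hypothesis adj_sym : symmetric adj.
Hypothesis hT : 4 <= T.
Local Notation cfg := (config adj T adv).

Definition heard (t : nat) (v : V) : bool := [exists w, adj v w && beeps (cfg t w)].

Definition induced (t : nat) (v : V) : bool :=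
  if cfg t v is Active d p _ then induces T d p (heard t v) else false.

(* The logical clock of [v] at the beginning of round [t]: 1 on activation,
   then +1 per round and +1 more per induction (its value is irrelevant while
   [v] is inactive). *)
Fixpoint clock (t : nat) (v : V) : nat :=
  if t is t'.+1 then
    if cfg t' v is Active _ _ _ then clock t' v + 1 + induced t' v else 1
  else 1.

Lemma config_active t v d p i : cfg t v = Active d p i ->
  cfg t.+1 v = fs_active_step T d p i (heard t v).
Proof. by move=> /= ->. Qed.

Lemma config_inactive t v : cfg t v = Inactive ->
  cfg t.+1 v = if heard t v || adv t.+1 v then activated else Inactive.
Proof. by move=> /= ->. Qed.

Lemma clock_succ t v : is_active (cfg t v) ->
  clock t.+1 v = clock t v + 1 + induced t v.
Proof. by rewrite /=; case: (cfg t v). Qed.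

Lemma clock_inactive t v : ~~ is_active (cfg t v) -> clock t.+1 v = 1.
Proof. by rewrite /=; case: (cfg t v). Qed.

Lemma heard_beep t v w : adj v w -> beeps (cfg t w) -> heard t v.
Proof. by move=> avw bw; apply/existsP; exists w; rewrite avw. Qed.

Lemma active_succ t v : is_active (cfg t v) -> is_active (cfg t.+1 v).
Proof.
case E: (cfg t v) => [|d p i] // _; rewrite (config_active E).
by have [p' [i' ->]] := step_delta hT d p i (heard t v).
Qed.

Lemma beeping_not_induced t v : beeps (cfg t v) -> ~~ induced t v.
Proof. by rewrite /induced; case: (cfg t v) => // d []. Qed.

Definition clock_inv (t : nat) : Prop := forall v d p i, cfg t v = Active d p i ->
  [/\ d = clock t v %% T, 0 < clock t v <= t.+1,
      p = Beep -> beep_phase T d & clock t v = 1 -> p = Beep].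

Definition wake_inv (t : nat) : Prop := forall v, is_active (cfg t v) -> 1 < clock t v ->
  forall w, adj v w -> is_active (cfg t w).

Definition skew_inv (t : nat) : Prop := forall u w, adj u w ->
  is_active (cfg t u) -> is_active (cfg t w) ->
  clock t u <= (clock t w).+1 \/
  [/\ clock t u = clock t w + 2, beeps (cfg t u) & at_cp T (clock t w).+1].

Section OneRound.
Variable t : nat.
Hypothesis ci : clock_inv t.

Lemma first_round_beeps v : is_active (cfg t v) -> clock t v <= 1 -> beeps (cfg t v).
Proof.
case E: (cfg t v) => [|d p i] // _ c1.
by have [_ c0 _ /(_ _) ->] := ci E => //; lia.
Qed.

Lemma induced_by_beep w : is_active (cfg t w) -> at_cp T (clock t w).+1 ->
  heard t w -> induced t w.
Proof.
case E: (cfg t w) => [|d p i] // _ hcp hw.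
have [ed _ hb _] := ci E; rewrite /induced E.
case: p E hb => E hb; last by rewrite /induces hw ed modSmod.
by have := no_beep_before_cp hT hcp; rewrite -ed hb.
Qed.

Lemma induced_spec v : induced t v ->
  (exists d, cfg t.+1 v = Active d Beep true) /\ at_cp T (clock t v).+1.
Proof.
rewrite /induced; case E: (cfg t v) => [|d p i] // hind.
have [ed _ _ _] := ci E; rewrite (config_active E) (step_induced hT i hind).
by split; [eexists | case: p E hind => //= _ /andP [_]; rewrite ed modSmod].
Qed.

Hypothesis si : skew_inv t.

Lemma inducer_ahead v w : induced t v -> adj v w -> beeps (cfg t w) ->
  clock t v < clock t w.
Proof.
move=> iv avw bw; have [_ cpv] := induced_spec iv.
case Ew: (cfg t w) bw => [|dw pw iw] // bw.
have [edw _ hbw _] := ci Ew; have {}hbw : beep_phase T dw by case: pw Ew bw hbw => // _ _ ->.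
have Av : is_active (cfg t v) by move: iv; rewrite /induced; case: (cfg t v).
have Bv : ~~ beeps (cfg t v).
  by move: iv; rewrite /induced; case: (cfg t v) => // d [].
have Aw : is_active (cfg t w) by rewrite Ew.
case: (si avw Av Aw) => [le|[_ bv _]]; last by rewrite bv in Bv.
case: (ltngtP (clock t v) (clock t w)) => // [gt|eq].
- have e : clock t v = (clock t w).+1 by lia.
  by move: cpv; rewrite e => /(no_beep_two_before_cp hT); rewrite -edw hbw.
- by move: cpv; rewrite eq => /(no_beep_before_cp hT); rewrite -edw hbw.
Qed.

Lemma clock_bound_succ v : is_active (cfg t v) -> clock t.+1 v <= t.+2.
Proof.
move=> Av; rewrite clock_succ //.
case Ev: (cfg t v) Av => [|d p i] // _.
have [_ /andP [_ ct] _ _] := ci Ev.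
case iv: (induced t v); last by rewrite addn0 addn1.
have [w /andP [avw bw]] : exists w, adj v w && beeps (cfg t w).
  by move: iv; rewrite /induced Ev; case: p {Ev} => //= /andP [/existsP].
have := inducer_ahead iv avw bw.
case Ew: (cfg t w) bw => [|dw pw iw] // _.
have [_ /andP [_ ctw] _ _] := ci Ew; lia.
Qed.

End OneRound.

Lemma activated_clock_inv t v d p i : clock t v = 1 -> activated = Active d p i ->
  [/\ d = clock t v %% T, 0 < clock t v <= t.+1,
      p = Beep -> beep_phase T d & clock t v = 1 -> p = Beep].
Proof.
by move=> -> [<- <- _]; split => //; rewrite ?modn_small ?beep_phase1 //; lia.
Qed.

Lemma clock_inv_succ t : clock_inv t -> skew_inv t -> clock_inv t.+1.
Proof.
move=> ci si v d' p' i' E'.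
case E: (cfg t v) => [|d p i].
  have Av : ~~ is_active (cfg t v) by rewrite E.
  move: E'; rewrite (config_inactive E); case: ifP => // _.
  exact: activated_clock_inv (clock_inactive Av).
have Av : is_active (cfg t v) by rewrite E.
have [ed /andP [c0 _] _ _] := ci _ _ _ _ E.
have cb := clock_bound_succ ci si Av.
have [p2 [i2 E2]] := step_delta hT d p i (heard t v).
move: E'; rewrite (config_active E) => E'.
move: (E'); rewrite E2 => -[ed' _ _].
rewrite (clock_succ Av) /induced E in cb *; split.
- by rewrite -ed' ed -addnA modnDml addnA.
- lia.
- by move=> eb; apply: (step_beep_phase hT (i' := i')); rewrite -eb; exact: E'.
- lia.
Qed.

Lemma wake_inv_succ t : clock_inv t -> wake_inv t -> wake_inv t.+1.
Proof.
move=> ci wi v _ c1 w avw.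
have Av : is_active (cfg t v) by apply: contraTT c1 => /clock_inactive ->.
case Aw: (is_active (cfg t w)); first exact: active_succ.
case: (leqP (clock t v) 1) => c; last by rewrite (wi v Av c w avw) in Aw.
case Ew: (cfg t w) Aw => [|dw pw iw] // _.
rewrite (config_inactive Ew) (@heard_beep t w v) //; first by rewrite adj_sym.
exact: first_round_beeps.
Qed.

Lemma skew_inv_succ t : clock_inv t -> wake_inv t -> skew_inv t -> skew_inv t.+1.
Proof.
move=> ci wi si u w auw _ _.
case Au: (is_active (cfg t u)); last by rewrite (clock_inactive (negbT Au)); left.
rewrite (clock_succ Au).
case Aw: (is_active (cfg t w)); last first.
  have c1 : clock t u <= 1 by case: leqP => // c; rewrite (wi u Au c w auw) in Aw.
  have /negbTE -> := beeping_not_induced (first_round_beeps ci Au c1).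
  by rewrite (clock_inactive (negbT Aw)); left; lia.
rewrite (clock_succ Aw).
case: (si u w auw Au Aw) => [le | [e bu cp]].
- case iu: (induced t u); case iw: (induced t w); try by left; lia.
  case: (ltnP (clock t u) (clock t w).+1) => [lt|ge]; first by left; lia.
  have [[du' Eu'] cpu] := induced_spec ci iu.
  right; split; [lia | by rewrite Eu' | ].
  by rewrite (_ : (clock t w + 1 + 0).+1 = (clock t u).+1) //; lia.
- have hw : heard t w by apply: (@heard_beep t w u); rewrite // adj_sym.
  rewrite (induced_by_beep ci Aw cp hw) (negbTE (beeping_not_induced bu)).
  by left; lia.
Qed.

Lemma invariants t : [/\ clock_inv t, wake_inv t & skew_inv t].
Proof.
elim: t => [|t [ci wi si]]; last first.
  by split; [exact: clock_inv_succ | exact: wake_inv_succ | exact: skew_inv_succ].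
split=> [v d p i | // | u w _ _ _]; last by left.
by move=> E; apply: (activated_clock_inv (i := i)) => //; move: E => /=; case: (adv 0 v).
Qed.

Lemma clock_spec t v d p i : cfg t v = Active d p i ->
  [/\ d = clock t v %% T, 0 < clock t v <= t.+1,
      p = Beep -> beep_phase T d & clock t v = 1 -> p = Beep].
Proof. by case: (invariants t) => ci _ _; apply: ci. Qed.

Lemma clock_range t v : is_active (cfg t v) -> 0 < clock t v <= t.+1.
Proof. by case E: (cfg t v) => [|d p i] //; case: (clock_spec E). Qed.

Lemma clock_mono t t' v : t <= t' -> is_active (cfg t v) ->
  is_active (cfg t' v) /\ clock t v + (t' - t) <= clock t' v.
Proof.
move=> le Av; elim: t' le => [|t' IH] le.
  have et : t = 0 by lia.
  by subst t; rewrite subnn addn0.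
case: (ltnP t t'.+1) => lt; last first.
  have et : t = t'.+1 by lia.
  by subst t; rewrite subnn addn0.
have [Av' c'] := IH lt; split; first exact: active_succ.
by rewrite clock_succ //; lia.
Qed.

Definition synced (t : nat) (v : V) : bool := is_active (cfg t v) && (clock t v == t.+1).

Lemma synced_mono t t' v : t <= t' -> synced t v -> synced t' v.
Proof.
move=> le /andP [Av /eqP c]; have [Av' c'] := clock_mono le Av.
by rewrite /synced Av' /=; have := clock_range Av'; apply: contraTT; lia.
Qed.

Lemma synced_phase t v d p i : synced t v -> cfg t v = Active d p i -> d = t.+1 %% T.
Proof. by move=> /andP [_ /eqP c] E; have [-> _ _ _] := clock_spec E; rewrite c. Qed.

Lemma synced_delta t v : synced t v -> delta_of (cfg t v) = Some (t.+1 %% T).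
Proof.
move=> sv; have := sv => /andP [Av _].
by case E: (cfg t v) Av => [|d p i] // _; rewrite (synced_phase sv E).
Qed.

Lemma synced_not_induced t v : synced t v -> synced t.+1 v -> ~~ induced t v.
Proof.
move=> /andP [Av /eqP c] /andP [_ /eqP c1].
by move: c1; rewrite clock_succ // c; case: (induced t v) => //=; lia.
Qed.

Lemma catch_up t w : is_active (cfg t w) -> t <= clock t w -> at_cp T t.+1 ->
  heard t w -> synced t.+1 w.
Proof.
move=> Aw le cp hw; have [ci _ _] := invariants t.
have /andP [_ ub] := clock_range Aw.
case: (ltnP (clock t w) t.+1) => lt; last first.
  by apply: (@synced_mono t); rewrite // /synced Aw; apply/eqP; lia.
have ec : clock t w = t by lia.
have cpw : at_cp T (clock t w).+1 by rewrite ec.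
have iw := induced_by_beep ci Aw cpw hw.
by rewrite /synced active_succ // clock_succ // iw ec addn1 addn1 /=.
Qed.

(* [v] beeps in round [s] right after an induction (or its activation in
   round 0), with Induced = true and maximal clock. *)
Definition just_induced (s : nat) (v : V) : Prop :=
  exists d, cfg s v = Active d Beep true /\ clock s v = s.+1.

Lemma synced_from_cp t v : synced t v -> exists2 s, s <= t & at_cp T s /\ just_induced s v.
Proof.
elim: t => [|t IH] /andP [Av /eqP c].
  exists 0 => //; split; first by rewrite /at_cp mod0n cp0.
  by exists 1; move: Av; rewrite /= /activated; case: (adv 0 v).
have {}Av : is_active (cfg t v) by apply: contraTT Av => /clock_inactive c1; lia.
have [ci _ _] := invariants t.
move: c; rewrite clock_succ //; case iv: (induced t v) => /= c.
- have [[d Ed] cp] := induced_spec ci iv.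
  have ec : clock t v = t by lia.
  exists t.+1 => //; split; first by rewrite -ec.
  by exists d; rewrite Ed clock_succ // iv /= ec !addn1.
- have [|s le h] := IH; first by rewrite /synced Av; apply/eqP; lia.
  by exists s => //; lia.
Qed.

Lemma armed_listener_step t v d : synced t v -> synced t.+1 v ->
  cfg t v = Active d Listen true ->
  (at_cp T t.+2 -> beeps (cfg t.+1 v)) /\
  (~~ at_cp T t.+2 -> exists d', cfg t.+1 v = Active d' Listen true).
Proof.
move=> st st1 E; have ni := synced_not_induced st st1.
have hd : d.+1 %% T = t.+2 %% T by rewrite (synced_phase st E) modSmod.
move: ni; rewrite /induced E (config_active E) (step_listenE hT) /induces hd -/(at_cp T t.+2).
case: (heard t v) => /= [/negbTE cp | _]; first by rewrite cp; split => // _; eauto.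
case cp: (at_cp T t.+2) => /=; first by split.
case: eqP => [e | _]; last by split => // _; eauto.
by move: cp; rewrite /at_cp e cp0.
Qed.

Section Propagation.
Variables (s s' : nat) (v : V).
Hypotheses (cp_s : at_cp T s) (cp_s' : at_cp T s') (lt_ss' : s < s')
  (no_cp_between : forall x, s < x -> x < s' -> ~~ at_cp T x)
  (ind_v : just_induced s v).

Lemma gap_ss' : s + 4 <= s'.
Proof. exact: (cp_gap hT cp_s cp_s' lt_ss'). Qed.

Lemma synced_s_v t : s <= t -> synced t v.
Proof.
by move=> le; case: ind_v => d [E c]; apply: (synced_mono le); rewrite /synced E c /=.
Qed.

Lemma induced_waits t : s < t -> t.+1 < s' -> exists d, cfg t v = Active d Listen true.
Proof.
elim: t => [|t IH] // lt1 lt2; case: (ltnP s t) => lt3.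
- have [d E] := IH lt3 (ltnW lt2).
  have [_ next] := armed_listener_step (synced_s_v (ltnW lt3)) (synced_s_v (ltnW lt1)) E.
  by apply: next; apply: no_cp_between; lia.
- have -> : t = s by lia.
  by case: ind_v => d [E _]; rewrite (config_active E) /=; eauto.
Qed.

Lemma induced_beeps_before_cp : beeps (cfg s'.-1 v).
Proof.
have gap := gap_ss'.
have [d E] := @induced_waits s'.-2 ltac:(lia) ltac:(lia).
have [next _] :=
  armed_listener_step (@synced_s_v s'.-2 ltac:(lia)) (@synced_s_v s'.-2.+1 ltac:(lia)) E.
have -> : s'.-1 = s'.-2.+1 by lia.
by apply: next; rewrite (_ : s'.-2.+2 = s') //; lia.
Qed.

Variable w : V.
Hypothesis adj_vw : adj v w.

Lemma neighbour_catches_up : is_active (cfg s.+1 w) /\ s.+1 <= clock s.+1 w.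
Proof.
case: ind_v => d [E c]; have [ci wi si] := invariants s.
have Av : is_active (cfg s v) by rewrite E.
have hw : heard s w by apply: (@heard_beep s w v); rewrite ?E // adj_sym.
case Aw: (is_active (cfg s w)).
- case: (si v w adj_vw Av Aw) => [le | [e _ cp]].
  + by have [Aw1 c1] := clock_mono (leqnSn s) Aw; split => //; lia.
  + split; first exact: active_succ.
    by rewrite clock_succ // (induced_by_beep ci Aw cp hw); lia.
- have s0 : s = 0.
    by case: (posnP s) => // sp; rewrite (wi v Av ltac:(lia) w adj_vw) in Aw.
  case Ew: (cfg s w) Aw => [|dw pw iw] // _.
  by rewrite (config_inactive Ew) hw clock_inactive ?Ew // s0.
Qed.

(* Hearing the beep of [v] in round [s' - 1], [w] catches up by round [s']. *)
Lemma neighbour_synced : synced s' w.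
Proof.
have gap := gap_ss'; have [Aw1 c1] := neighbour_catches_up.
have [Aw c] := @clock_mono s.+1 s'.-1 w ltac:(lia) Aw1.
have -> : s' = s'.-1.+1 by lia.
apply: catch_up => //; first lia.
  by rewrite prednK //; lia.
by apply: (@heard_beep _ w v); [rewrite adj_sym | exact: induced_beeps_before_cp].
Qed.

End Propagation.

Lemma synced_by_distance k w o : adv 0 o -> reach adj k w o -> synced (cp_round T k) w.
Proof.
move=> ao; elim: k w => [|k IH] w /=.
  by move/eqP->; rewrite cp_round0 /synced /= ao.
have lt := cp_round_lt hT k.
case/orP => [r | /existsP [u /andP [awu r]]].
  exact: synced_mono (ltnW lt) (IH w r).
have [s le [cp ind]] := synced_from_cp (IH u r).
have [s' [lt' cp' between first]] := next_cp hT s.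
apply: (@synced_mono s'); last by apply: (neighbour_synced cp cp' lt' between ind); rewrite adj_sym.
by apply: first; [lia | exact: cp_round_at_cp].
Qed.

Section Stabilization.
Variable R : nat.
Hypothesis all_synced : forall t v, R <= t -> synced t v.

Lemma stable_step t v d p i : R <= t -> cfg t v = Active d p i ->
  [/\ d < T, p = Beep -> beep_phase T d & ~~ induces T d p (heard t v)].
Proof.
move=> le E; have [ed _ hb _] := clock_spec E; split => //; first by rewrite ed mod_lt.
have := synced_not_induced (@all_synced t v le) (@all_synced t.+1 v ltac:(lia)).
by rewrite /induced E.
Qed.

Lemma flag_kept t v d p : R <= t -> cfg t v = Active d p false ->
  exists d' p', cfg t.+1 v = Active d' p' false.
Proof.
move=> le E; have [_ _ ni] := stable_step le E.
by rewrite (config_active E); apply: step_keeps_uninduced.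
Qed.

Lemma flag_cleared t v : R <= t -> t.+2 %% T = 0 ->
  exists d p, cfg t.+1 v = Active d p false.
Proof.
move=> le h0; have sv := @all_synced t v le; have /andP [Av _] := sv.
case E: (cfg t v) Av => [|d p i] // _; have [hd hb ni] := stable_step le E.
have hd0 : d.+1 %% T = 0 by rewrite (synced_phase sv E) modSmod.
by rewrite (config_active E) (step_wrap hT i hd hb ni hd0); eauto.
Qed.

(* Such a wrap-around happens within [T] rounds after [R]: at the last
   multiple of [T] up to [t + 1]. *)
Lemma flag_eventually_cleared t v : R + T <= t -> exists d p, cfg t v = Active d p false.
Proof.
move=> le; have Tp : 0 < T by lia.
have ey := divn_eq t.+1 T; have r := ltn_pmod t.+1 Tp.
move: (t.+1 %/ T) (t.+1 %% T) ey r => q r' ey r.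
have wrap : (q * T).-2.+2 %% T = 0 by rewrite (_ : (q * T).-2.+2 = q * T) ?modnMl //; nia.
have [d [p E]] := @flag_cleared (q * T).-2 v ltac:(nia) wrap.
have kept n : exists d p, cfg ((q * T).-1 + n) v = Active d p false.
  elim: n => [|n [d' [p' IH]]]; first by rewrite addn0 -(_ : (q * T).-2.+1 = (q * T).-1); eauto; nia.
  by rewrite addnS; apply: flag_kept IH; nia.
by have := kept (t - (q * T).-1); rewrite subnKC //; nia.
Qed.

Lemma beeps_iff_phase0 t v : R + T < t ->
  beeps (cfg t v) <-> delta_of (cfg t v) = Some 0.
Proof.
case: t => [|t] lt //; have [d [p E]] := @flag_eventually_cleared t v ltac:(lia).
have le : R <= t by lia.
have [hd hb ni] := stable_step le E.
by rewrite (config_active E) (step_uninduced_beeps hT hd hb ni); split => [/eqP|->].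
Qed.

End Stabilization.

End Execution.

Theorem theorem1 (V : finType) (adj : rel V)
  (adj_sym : symmetric adj) (adj_irr : irreflexive adj)
  (D T : nat) (hconn : connected adj) (hdiam : is_diameter adj D)
  (hT : 4 <= T)
  (adv : nat -> V -> bool) (hstart : exists v, adv 0 v) :
  let R := 4 * D + (D %/ (T %/ 4)) * (T %% 4) in
  (forall t, R <= t ->
     (forall v, is_active (config adj T adv t v)) /\
     (forall v w, delta_of (config adj T adv t v) =
                  delta_of (config adj T adv t w))) /\
  (exists t1, forall t, t1 <= t -> forall v,
     beeps (config adj T adv t v) <-> delta_of (config adj T adv t v) = Some 0) /\
  R <= 7 * D.
Proof.
move=> R; have eR : cp_round T D = R by rewrite cp_roundE.
have all_synced t v : R <= t -> synced adj T adv t v.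
  move=> le; case: hstart => o ao.
  apply: (synced_mono adj_sym hT le); rewrite -eR.
  have [reach_D _] := hdiam.
  exact: (synced_by_distance adj_sym hT ao (reach_D v o)).
split; [|split].
- move=> t le; split => [v | v w]; first by case/andP: (all_synced t v le).
  by rewrite !(synced_delta adj_sym hT (all_synced _ _ le)).
- by exists (R + T).+1 => t le v; apply: (beeps_iff_phase0 adj_sym hT all_synced).
- by rewrite -eR cp_round_le.
Qed.
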